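(* Let $F$ be a fixed graph that is not a forest and let $k$ be a fixed positive integer. Then, as $n\to\infty$, \[\mathrm{ex}(n,M_k,F)=(1+o(1))\frac{\mathrm{ex}(n,F)^k}{k!}.\]
   Context: $M_k$ is the matching with $k$ edges. $\mathrm{ex}(n,F)$ is the maximum number of edges in an $F$-free graph on $n$ vertices. For graphs $H,G$, $\mathcal{N}(H,G)$ is the number of subgraphs of $G$ isomorphic to $H$, and $\mathrm{ex}(n,H,F)$ is the maximum of $\mathcal{N}(H,G)$ over $F$-free graphs $G$ on $n$ vertices. *)

From mathcomp Require Import all_boot all_order all_algebra.
Set Implicit Arguments. Unset Strict Implicit. Unset Printing Implicit Defensive.

(* A (simple) graph on vertex set 'I_n is given by its edge set: a set of
   2-element subsets of 'I_n. *)
Definition is_graph n (E : {set {set 'I_n}}) : bool :=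
  [forall e in E, #|e| == 2].

Definition contains m (F : {set {set 'I_m}}) n (G : {set {set 'I_n}}) : bool :=
  [exists f : {ffun 'I_m -> 'I_n},
     injectiveb f && [forall e in F, (f @: e) \in G]].

Definition Ffree m (F : {set {set 'I_m}}) n (G : {set {set 'I_n}}) : bool :=
  ~~ contains F G.

Definition has_cycle m (F : {set {set 'I_m}}) : Prop :=
  exists l : nat, 3 <= l /\
    exists f : 'I_l -> 'I_m, injective f /\
      forall i : 'I_l, [set f i; f (ordS i)] \in F.

Definition is_forest m (F : {set {set 'I_m}}) : Prop := ~ has_cycle F.

(* N(M_k, G): number of subgraphs of G isomorphic to the matching M_k,
   i.e. number of sets of k pairwise disjoint edges of G. *)
Definition num_matchings n (k : nat) (G : {set {set 'I_n}}) : nat :=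
  #|[set S : {set {set 'I_n}} | [&& S \subset G, #|S| == k &
      [forall e1 in S, forall e2 in S, (e1 != e2) ==> [disjoint e1 & e2]]]]|.

Definition ex n m (F : {set {set 'I_m}}) : nat :=
  \max_(G : {set {set 'I_n}} | is_graph G && Ffree F G) #|G|.

Definition ex_matching n k m (F : {set {set 'I_m}}) : nat :=
  \max_(G : {set {set 'I_n}} | is_graph G && Ffree F G) num_matchings k G.

From mathcomp Require Import all_boot all_order all_algebra.
From mathcomp Require Import zify ring lra.

Set Implicit Arguments.
Unset Strict Implicit.
Unset Printing Implicit Defensive.

(* Every k-matching of G is a k-set of edges, so k! N(M_k, G) <= e(G)^k.
   Conversely, a k-set of edges that is not a matching is a (k-1)-set plus one
   of the at most 2(k-1)n edges meeting it, so all but O(n e(G)^(k-1)) of the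
   e(G)^k / k! k-sets are matchings.  Taking G extremal, the relative error is
   O(n / ex(n, F)), and it tends to 0 because ex(n, F) is superlinear when F
   has a cycle: by averaging over all graphs with d n edges, one of them has at
   most sum_(3 <= l <= m) (4d)^l cycles of length at most m, and deleting
   their edges leaves an F-free graph with d n - O(1) edges. *)

Lemma leq_card_bigcup (I : Type) (T : finType) (r : seq I) (P : pred I)
    (A : I -> {set T}) :
  #|\bigcup_(i <- r | P i) A i| <= \sum_(i <- r | P i) #|A i|.
Proof.
elim/big_rec2: _ => [|i X s _ leXs]; first by rewrite cards0.
by rewrite (leq_trans (leq_card_setU _ _)) ?leq_add2l.
Qed.

Section Matchings.

Variables (n : nat) (G : {set {set 'I_n}}).
Hypothesis graphG : is_graph G.

Lemma num_matchings_le_bin k : num_matchings k G <= 'C(#|G|, k).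
Proof.
rewrite /num_matchings -cards_draws; apply/subset_leq_card/subsetP => S.
by rewrite !inE => /and3P[-> -> _].
Qed.

Lemma card_edge (e : {set 'I_n}) : e \in G -> #|e| = 2.
Proof. by move=> eG; apply/eqP; move/forall_inP: graphG; apply. Qed.

Lemma card_edges_meeting (e : {set 'I_n}) :
  #|[set f in G | ~~ [disjoint e & f]]| <= #|e| * n.
Proof.
have sub : [set f in G | ~~ [disjoint e & f]] \subset
           [set [set p.1; p.2] | p in setX e [set: 'I_n]].
  apply/subsetP=> f; rewrite inE => /andP[fG].
  rewrite -setI_eq0 => /set0Pn[x /setIP[xe xf]].
  have /cards2P[a [b [_ defab]]] : #|f| == 2 by rewrite card_edge.
  apply/imsetP; move: xf; rewrite defab => /set2P[] <-.
  - by exists (x, b); rewrite ?inE ?xe.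
  - by exists (x, a); rewrite ?inE ?xe // setUC.
rewrite (leq_trans (subset_leq_card sub)) // (leq_trans (leq_imset_card _ _)) //.
by rewrite cardsX cardsT card_ord.
Qed.

(* A (j+1)-subset of G that is not a matching arises from some j-subset T by
   adding an edge that meets an edge of T. *)
Lemma bin_le_num_matchings j :
  'C(#|G|, j.+1) <= num_matchings j.+1 G + 'C(#|G|, j) * (j * (2 * n)).
Proof.
set A := [set S : {set {set 'I_n}} | S \subset G & #|S| == j.+1].
set Ts := [set T : {set {set 'I_n}} | T \subset G & #|T| == j].
pose meeting (T : {set {set 'I_n}}) :=
  [set f in G | [exists e in T, ~~ [disjoint e & f]]].
rewrite -!cards_draws -/A -/Ts /num_matchings.
set M := [set S | _ & _]; rewrite -(cardsID M A).
apply: leq_add; first exact/subset_leq_card/subsetIr.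
have sub : A :\: M \subset \bigcup_(T in Ts) [set f |: T | f in meeting T].
  apply/subsetP=> S; rewrite !inE => /andP[notM /andP[SG /eqP cardS]].
  move: notM; rewrite SG cardS eqxx /= => /forall_inPn[e eS].
  move=> /forall_inPn[f fS]; rewrite negb_imply => /andP[nef meet].
  apply/bigcupP; exists (S :\ f).
    rewrite inE (subset_trans (subsetDl S _) SG) /=.
    by move: cardS; rewrite (cardsD1 f) fS add1n => -[->].
  apply/imsetP; exists f; last by rewrite setD1K.
  by rewrite inE (subsetP SG) //=; apply/exists_inP; exists e; rewrite // !inE eS nef.
rewrite (leq_trans (subset_leq_card sub)) // (leq_trans (leq_card_bigcup _ _ _)) //.
rewrite -sum_nat_const; apply: leq_sum => T; rewrite inE => /andP[TG /eqP cardT].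
rewrite (leq_trans (leq_imset_card _ _)) //.
have subT : meeting T \subset \bigcup_(e in T) [set f in G | ~~ [disjoint e & f]].
  apply/subsetP=> f; rewrite inE => /andP[fG /exists_inP[e eT meet]].
  by apply/bigcupP; exists e; rewrite // inE fG.
rewrite (leq_trans (subset_leq_card subT)) // (leq_trans (leq_card_bigcup _ _ _)) //.
rewrite -cardT -sum_nat_const; apply: leq_sum => e eT.
by rewrite -(card_edge (subsetP TG e eT)) card_edges_meeting.
Qed.

End Matchings.

Lemma ffact_le_expn E k : E ^_ k <= E ^ k.
Proof.
elim: k => // k IH; rewrite ffactnSr expnSr.
exact: leq_mul IH (leq_subr _ _).
Qed.

Lemma expn_le_ffact E k : E ^ k.+1 <= E ^_ k.+1 + k.+1 * k.+1 * E ^ k.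
Proof.
elim: k => [|k IH]; first by rewrite ffactn1 muln1 leq_addr.
have step : E ^_ k.+1 * E <= E ^_ k.+2 + k.+1 * E ^ k.+1.
  have splitE : E <= (E - k.+1) + k.+1 by lia.
  rewrite [E ^_ k.+2]ffactnSr (leq_trans (leq_mul (leqnn _) splitE)) //.
  by rewrite mulnDr leq_add2l mulnC leq_mul2l ffact_le_expn orbT.
rewrite [E ^ k.+2]expnSr (leq_trans (leq_mul IH (leqnn E))) // mulnDl.
rewrite -mulnA -expnSr (leq_trans (leq_add step (leqnn _))) // -addnA leq_add2l.
by rewrite -mulnDl leq_mul2r; apply/orP; right; nia.
Qed.

Section ExtremalNumbers.

Variables (m : nat) (F : {set {set 'I_m}}) (n : nat).

Let admissible (G : {set {set 'I_n}}) := is_graph G && Ffree F G.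

Lemma card_le_ex (G : {set {set 'I_n}}) : is_graph G -> Ffree F G -> #|G| <= ex n F.
Proof. by move=> gG fG; apply: leq_bigmax_cond; rewrite gG. Qed.

Lemma num_matchings_le_ex_matching k (G : {set {set 'I_n}}) :
  is_graph G -> Ffree F G -> num_matchings k G <= ex_matching n k F.
Proof. by move=> gG fG; apply: leq_bigmax_cond; rewrite gG. Qed.

Lemma ex_attained : 0 < ex n F ->
  exists G : {set {set 'I_n}}, [/\ is_graph G, Ffree F G & #|G| = ex n F].
Proof.
move=> ex_gt0; have [G0 G0adm|noG] := pickP admissible; last first.
  by move: ex_gt0; rewrite /ex big_pred0.
have [|G /andP[gG fG] exG] := @eq_bigmax_cond _ admissible (fun G => #|G|).
  by apply/card_gt0P; exists G0.
by exists G; split; rewrite // -exG; apply: eq_bigl.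
Qed.

Lemma fact_ex_matching_le k : k`! * ex_matching n k F <= ex n F ^ k.
Proof.
rewrite (leq_trans _ (ffact_le_expn _ k)) // -bin_ffact mulnC leq_mul2r.
apply/orP; right; apply/bigmax_leqP => G /andP[gG fG].
by rewrite (leq_trans (num_matchings_le_bin _ _)) // leq_bin2l ?card_le_ex.
Qed.

Lemma expn_ex_le j : 0 < n -> 0 < ex n F ->
  ex n F ^ j.+1 <= j.+1`! * ex_matching n j.+1 F + 3 * j.+1 * j.+1 * n * ex n F ^ j.
Proof.
move=> n_gt0 /ex_attained[G [gG fG <-]]; set E := #|G|.
have lowerX := num_matchings_le_ex_matching j.+1 gG fG.
have lowerC : E ^_ j.+1 <= j.+1`! * num_matchings j.+1 G + j.+1 * E ^_ j * (j * (2 * n)).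
  rewrite -bin_ffact mulnC (leq_trans (leq_mul (leqnn _) (bin_le_num_matchings gG j))) //.
  by rewrite mulnDr leq_add2l -(bin_ffact _ j) factS -/E; apply: eq_leq; ring.
apply: (leq_trans (expn_le_ffact E j)); rewrite addnC.
apply: (leq_trans (leq_add (leqnn _) lowerC)); rewrite addnCA.
rewrite leq_add ?leq_mul2l ?lowerX ?orbT //.
have -> : 3 * j.+1 * j.+1 * n * E ^ j =
          j.+1 * j.+1 * E ^ j * n + j.+1 * E ^ j * (j.+1 * (2 * n)) by ring.
by rewrite leq_add ?leq_pmulr ?leq_mul ?ffact_le_expn.
Qed.

End ExtremalNumbers.

Lemma val_iter_ordS l (i : 'I_l) k : val (iter k (@ordS l) i) = (k + i) %% l.
Proof.
elim: k => [|k IH] /=; first by rewrite add0n modn_small.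
by rewrite IH -addn1 modnDml addn1 addSn.
Qed.

Lemma iter_ordS_neq l (i : 'I_l) k : 0 < k < l -> iter k (@ordS l) i != i.
Proof.
case/andP=> k_gt0 k_lt_l; apply/eqP=> /(congr1 val); rewrite val_iter_ordS.
move/eqP; rewrite -[X in _ == X](modn_small (ltn_ord i)) -[X in _ == X %% _]add0n eqn_modDr.
by rewrite !modn_small ?(ltn_trans k_gt0) // eqn0Ngt k_gt0.
Qed.

Lemma eq_set2 (T : finType) (a b c d : T) :
  [set a; b] = [set c; d] -> (a = c /\ b = d) \/ (a = d /\ b = c).
Proof.
move=> eq_ab_cd.
have ac : a \in [set c; d] by rewrite -eq_ab_cd set21.
have bc : b \in [set c; d] by rewrite -eq_ab_cd set22.
have ca : c \in [set a; b] by rewrite eq_ab_cd set21.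
have da : d \in [set a; b] by rewrite eq_ab_cd set22.
move: ac bc ca da => /set2P[] ? /set2P[] ? /set2P[] ? /set2P[] ?; subst; auto.
Qed.

Definition cycle_edges n l (g : {ffun 'I_l -> 'I_n}) : {set {set 'I_n}} :=
  [set [set g i; g (ordS i)] | i : 'I_l].

Section CycleEdges.

Variables (n l : nat) (g : {ffun 'I_l -> 'I_n}).
Hypotheses (l_ge3 : 2 < l) (inj_g : injective g).

Lemma card_cycle_edges : #|cycle_edges g| = l.
Proof.
rewrite card_imset ?card_ord // => i j /eq_set2[[/inj_g -> //] | [gi gSi]].
have := @iter_ordS_neq l j 2; rewrite l_ge3 /= -(inj_g gi) (inj_g gSi) eqxx.
by move/implyP.
Qed.

Lemma card_cycle_edge e : e \in cycle_edges g -> #|e| = 2.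
Proof.
case/imsetP=> i _ ->; rewrite cards2 (inj_eq inj_g) eq_sym.
by have /= -> := @iter_ordS_neq l i 1 (ltnW l_ge3).
Qed.

Lemma cycle_edges_neq0 : cycle_edges g != set0.
Proof.
apply/set0Pn; pose i : 'I_l := Ordinal (ltnW (ltnW l_ge3)).
by exists [set g i; g (ordS i)]; apply/imsetP; exists i.
Qed.

End CycleEdges.

Definition girth_gt n m (G : {set {set 'I_n}}) : Prop :=
  forall l, 2 < l <= m -> forall g : {ffun 'I_l -> 'I_n},
    injective g -> ~~ (cycle_edges g \subset G).

Lemma girth_gt_Ffree m (F : {set {set 'I_m}}) n (G : {set {set 'I_n}}) :
  has_cycle F -> girth_gt m G -> Ffree F G.
Proof.
move=> [l [l_ge3 [h [inj_h cycF]]]] girthG.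
apply/negP=> /existsP[f /andP[/injectiveP inj_f /forall_inP FG]].
have l_le_m : l <= m by have := leq_card h inj_h; rewrite !card_ord.
pose g := [ffun i => f (h i)].
have inj_g : injective g by move=> i j; rewrite !ffunE => /inj_f /inj_h.
have l_range : 2 < l <= m by rewrite l_ge3.
apply: (negP (girthG l l_range g inj_g)).
apply/subsetP=> _ /imsetP[i _ ->].
by have := FG _ (cycF i); rewrite imsetU1 imset_set1 !ffunE.
Qed.

Lemma card_supersets_le (T : finType) (K C : {set T}) e :
  C \subset K -> #|C| <= e ->
  #|[set S : {set T} | [&& S \subset K, #|S| == e & C \subset S]]|
    <= 'C(#|K| - #|C|, e - #|C|).
Proof.
move=> CK Ce; rewrite -(cardsDS CK) -cards_draws.
have sub : [set S : {set T} | [&& S \subset K, #|S| == e & C \subset S]] \subset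
    (fun X => X :|: C) @: [set X : {set T} | X \subset K :\: C & #|X| == e - #|C|].
  apply/subsetP=> S; rewrite inE => /and3P[SK /eqP cardS CS].
  apply/imsetP; exists (S :\: C); first by rewrite inE setSD //= cardsDS // cardS.
  by rewrite -{1}(setID S C) (setIidPr CS) setUC.
by rewrite (leq_trans (subset_leq_card sub)) // leq_imset_card.
Qed.

Lemma bin_sub_mul_expn_le M e c : c <= e <= M ->
  'C(M - c, e - c) * M ^ c <= 'C(M, e) * e ^ c.
Proof.
case/andP; elim: c => [|c IH] c_lt_e e_le_M; first by rewrite !subn0 !muln1.
have M_gt_c : 0 < M - c by rewrite subn_gt0 (leq_trans c_lt_e).
have diag := mul_bin_diag (M - c) (e - c.+1).
rewrite -subnS (_ : (e - c.+1).+1 = e - c) in diag; last by rewrite subnSK.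
have step : 'C(M - c.+1, e - c.+1) * M <= e * 'C(M - c, e - c).
  have key : (e - c) * M <= e * (M - c) by nia.
  rewrite -(leq_pmul2l M_gt_c) mulnA diag mulnAC [leqRHS]mulnCA mulnA leq_mul2r.
  by rewrite key orbT.
rewrite expnS mulnA (leq_trans (leq_mul step (leqnn _))) // -mulnA.
by rewrite (leq_trans (leq_mul (leqnn e) (IH (ltnW c_lt_e) e_le_M))) // expnS mulnCA.
Qed.

Lemma two_bin2 n : 2 * 'C(n, 2) = n * n.-1.
Proof. by rewrite -mul_bin_diag bin1. Qed.

Definition complete_graph n : {set {set 'I_n}} := [set e : {set 'I_n} | #|e| == 2].

Definition graphs_of_size n e : {set {set {set 'I_n}}} :=
  [set S : {set {set 'I_n}} | S \subset complete_graph n & #|S| == e].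

Definition cycles_in n (S : {set {set 'I_n}}) l : {set {ffun 'I_l -> 'I_n}} :=
  [set g : {ffun 'I_l -> 'I_n} | injectiveb g & cycle_edges g \subset S].

Definition num_short_cycles n m (S : {set {set 'I_n}}) : nat :=
  \sum_(l < m.+1 | 2 < l) #|cycles_in S l|.

Lemma card_complete_graph n : #|complete_graph n| = 'C(n, 2).
Proof. by rewrite card_draws card_ord. Qed.

Lemma card_graphs_of_size n e : #|graphs_of_size n e| = 'C('C(n, 2), e).
Proof. by rewrite cards_draws card_complete_graph. Qed.

(* Double counting: each of the at most n ^ l injective l-cycles lies in
   exactly 'C('C(n, 2) - l, e - l) graphs with e edges. *)
Lemma sum_card_cycles_in_le n e l : 2 < l <= e ->
  \sum_(S in graphs_of_size n e) #|cycles_in S l|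
    <= n ^ l * 'C('C(n, 2) - l, e - l).
Proof.
case/andP=> l_ge3 l_le_e.
under eq_bigr => S _ do rewrite -sum1_card.
rewrite (exchange_big_dep (fun g : {ffun 'I_l -> 'I_n} => injectiveb g)) /=; last first.
  by move=> S g _; rewrite inE => /andP[].
have -> : n ^ l = #|{ffun 'I_l -> 'I_n}| by rewrite card_ffun !card_ord.
rewrite -sum_nat_const.
rewrite [leqRHS](bigID (fun g : {ffun 'I_l -> 'I_n} => injectiveb g)) /=.
apply: leq_trans (leq_addr _ _); apply: leq_sum => g /injectiveP inj_g.
have card_g := card_cycle_edges l_ge3 inj_g.
have sub_g : cycle_edges g \subset complete_graph n.
  by apply/subsetP=> x /(card_cycle_edge l_ge3 inj_g) cx; rewrite inE cx.
rewrite sum1dep_card -card_complete_graph.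
have -> : 'C(#|complete_graph n| - l, e - l) =
          'C(#|complete_graph n| - #|cycle_edges g|, e - #|cycle_edges g|).
  by rewrite card_g.
apply: leq_trans (card_supersets_le sub_g _); last by rewrite card_g.
apply/subset_leq_card/subsetP=> S; rewrite !inE.
by case/andP=> /andP[-> ->] /andP[_ ->].
Qed.

Lemma cycle_count_ratio_le n d l : 1 < n -> 2 < l <= d * n -> d * n <= 'C(n, 2) ->
  n ^ l * 'C('C(n, 2) - l, d * n - l) <= 'C('C(n, 2), d * n) * (4 * d) ^ l.
Proof.
move=> n_gt1 /andP[l_ge3 l_le_e] e_le_M; set M := 'C(n, 2) in e_le_M *.
have twoM := two_bin2 n; rewrite -/M in twoM.
have M_gt0 : 0 < M ^ l by rewrite expn_gt0 -(ltn_pmul2l (isT : 0 < 2)) twoM; nia.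
rewrite -(leq_pmul2r M_gt0) -mulnA.
apply: (leq_trans (leq_mul (leqnn _) (bin_sub_mul_expn_le _))); first by rewrite l_le_e.
rewrite mulnCA -mulnA leq_mul2l -!expnMn leq_exp2r ?(ltnW (ltnW l_ge3)) //.
by apply/orP; right; nia.
Qed.

Lemma sum_num_short_cycles_le n m d : 1 < n -> m <= d * n -> d * n <= 'C(n, 2) ->
  \sum_(S in graphs_of_size n (d * n)) num_short_cycles m S
    <= #|graphs_of_size n (d * n)| * \sum_(l < m.+1 | 2 < l) (4 * d) ^ l.
Proof.
move=> n_gt1 m_le_e e_le_M.
rewrite /num_short_cycles exchange_big big_distrr /=; apply: leq_sum => l l_ge3.
have l_range : 2 < l <= d * n by rewrite l_ge3 (leq_trans _ m_le_e) // -ltnS.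
apply: (leq_trans (sum_card_cycles_in_le n l_range)).
by rewrite card_graphs_of_size cycle_count_ratio_le.
Qed.

Lemma exists_le_average (T : finType) (A : {set T}) (f : T -> nat) b :
  0 < #|A| -> \sum_(x in A) f x <= #|A| * b -> exists2 x, x \in A & f x <= b.
Proof.
move=> A_gt0 sum_le; apply/exists_inP; move: sum_le; apply: contraLR.
rewrite negb_exists_in -ltnNge => /forall_inP gt_b; have {}gt_b x : x \in A -> b.+1 <= f x.
  by move/gt_b; rewrite ltnNge.
by rewrite (leq_trans _ (leq_sum _ gt_b)) // sum_nat_const ltn_pmul2l.
Qed.

Lemma delete_short_cycles n m e (S : {set {set 'I_n}}) :
  S \in graphs_of_size n e ->
  exists G : {set {set 'I_n}},
    [/\ is_graph G, e - m * num_short_cycles m S <= #|G| & girth_gt m G].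
Proof.
rewrite inE => /andP[S_sub /eqP cardS].
set R := \bigcup_(l < m.+1 | 2 < l) \bigcup_(g in cycles_in S l) cycle_edges g.
exists (S :\: R); split.
- apply/forall_inP=> x /setDP[xS _].
  by have := subsetP S_sub x xS; rewrite inE.
- have card_R : #|R| <= m * num_short_cycles m S.
    rewrite /num_short_cycles big_distrr /= (leq_trans (leq_card_bigcup _ _ _)) //.
    apply: leq_sum => l l_ge3; rewrite (leq_trans (leq_card_bigcup _ _ _)) //.
    rewrite -sum1_card big_distrr /=; apply: leq_sum => g _.
    by rewrite muln1 (leq_trans (leq_imset_card _ _)) // card_ord -ltnS.
  rewrite cardsD cardS; have := subset_leq_card (subsetIr S R); lia.
- move=> l /andP[l_ge3 l_le_m] g inj_g; apply/negP=> cyc_sub.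
  pose l' : 'I_m.+1 := Ordinal (l_le_m : l < m.+1).
  have cyc_R : cycle_edges g \subset R.
    apply/subsetP=> x xg; apply/bigcupP; exists l' => //; apply/bigcupP; exists g => //.
    by rewrite inE (subset_trans cyc_sub (subsetDl _ _)) andbT; apply/injectiveP.
  have /set0Pn[x xg] := cycle_edges_neq0 g l_ge3.
  by have := subsetP cyc_sub x xg; rewrite inE (subsetP cyc_R x xg).
Qed.

Lemma ex_superlinear m (F : {set {set 'I_m}}) : ~ is_forest F ->
  forall D, exists N, forall n, N <= n -> D * n <= ex n F.
Proof.
move=> not_forest D; set d := D.+1.
(* n > 2d gives d n <= 'C(n, 2), and n >= m B makes the at most m B deleted
   edges cost no more than (d - D) n = n. *)
set B := \sum_(l < m.+1 | 2 < l) (4 * d) ^ l.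
exists ((2 * d).+1 + m + m * B) => n n_large.
apply/idPn=> ex_small; apply: not_forest => cycF; move/negP: ex_small; apply.
have n_gt1 : 1 < n by lia.
have e_le_M : d * n <= 'C(n, 2).
  by rewrite -(leq_pmul2l (isT : 0 < 2)) two_bin2; nia.
have m_le_e : m <= d * n by nia.
have graphs_gt0 : 0 < #|graphs_of_size n (d * n)| by rewrite card_graphs_of_size bin_gt0.
have [S S_size few_cycles] :=
  exists_le_average graphs_gt0 (sum_num_short_cycles_le n_gt1 m_le_e e_le_M).
have [G [graphG cardG girthG]] := delete_short_cycles m S_size.
have := card_le_ex graphG (girth_gt_Ffree cycF girthG).
have : m * num_short_cycles m S <= m * B by rewrite leq_mul2l few_cycles orbT.
lia.
Qed.

Import Order.TTheory GRing.Theory Num.Theory.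
Local Open Scope ring_scope.

Lemma ratio_near_one (R : realFieldType) (x p eps : R) :
  0 < p -> x <= p -> p <= x + eps * p -> `|x / p - 1| <= eps.
Proof.
move=> p_gt0 x_le_p p_le.
have ratio_le1 : x / p <= 1 by rewrite ler_pdivrMr // mul1r.
have ratio_ge : 1 - eps <= x / p by rewrite ler_pdivlMr // mulrBl mul1r; lra.
by rewrite ler_norml; apply/andP; split; lra.
Qed.

Unset Implicit Arguments.

Theorem mainTheorem17 (m : nat) (F : {set {set 'I_m}}) (k : nat) :
  is_graph F -> ~ is_forest F -> (0 < k)%N ->
  forall eps : rat, 0 < eps ->
  exists N : nat, forall n : nat, (N <= n)%N ->
    `| (ex_matching n k F)%:R * (k`!)%:R / ((ex n F)%:R ^+ k) - 1 | <= eps.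
Proof.
move=> _ not_forest; case: k => [//|j] _ eps eps_gt0.
set c := (3 * j.+1 * j.+1)%N; set D := Num.bound (c%:R / eps).
have c_lt : c%:R < eps * D%:R.
  by rewrite mulrC -ltr_pdivrMr // archi_boundP // divr_ge0 // ltW.
have [N0 ex_large] := ex_superlinear not_forest D.
exists (maxn N0 1) => n; rewrite geq_max => /andP[/ex_large Dn_le n_gt0].
have ex_gt0 : (0 < ex n F)%N by apply: leq_trans Dn_le; rewrite muln_gt0 n_gt0.
have upper := fact_ex_matching_le F n j.+1.
have lower := expn_ex_le j n_gt0 ex_gt0.
set E := ex n F in Dn_le ex_gt0 upper lower *; set X := ex_matching n j.+1 F in upper lower *.
have cn_le : c%:R * n%:R <= eps * E%:R :> rat.
  have : (D * n)%:R <= E%:R :> rat by rewrite ler_nat.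
  rewrite natrM => DnE; have n_ge0 : 0 <= n%:R :> rat by [].
  nra.
have err_le : (c * n * E ^ j)%:R <= eps * (E ^ j.+1)%:R :> rat.
  rewrite natrM [(c * n)%:R]natrM expnSr natrM mulrA.
  by rewrite [X in _ <= X]mulrAC ler_wpM2r.
rewrite -natrM -natrX; apply: ratio_near_one; first by rewrite ltr0n expn_gt0 ex_gt0.
  by rewrite ler_nat mulnC.
by move: lower; rewrite -/c -(ler_nat rat) natrD mulnC; lra.
Qed.
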